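(* Let $(X,\mathrm{dist})$ be a metric space and $\Sigma$ a compact metric space. Let $T(h):\Sigma\to\Sigma$, $h\ge0$, be a semigroup with $T(h)\Sigma=\Sigma$ for all $h\ge0$, and let $\{U_\sigma(t,\tau)\}_{\sigma\in\Sigma}$ be a family of processes on $X$ satisfying $U_\sigma(h+t,h+\tau)=U_{T(h)\sigma}(t,\tau)$ for all $\sigma\in\Sigma$, $h\ge0$, $t\ge\tau$. Assume the family is uniformly asymptotically compact (which, when $X$ is complete, is equivalent to being totally uniformly dissipative), and let $A_\Sigma$ be its uniform global attractor. If the family is asymptotically closed with respect to some sequence $h_k$ and $T(h_k)$ is continuous for every $k$, then $A_\Sigma=\bigcup_{\sigma\in\Sigma}\mathcal{K}_\sigma(0)$.
   Context: A process on $X$ is a family of maps $U(t,\tau):X\to X$, indexed by reals $t\ge\tau$, with $U(\tau,\tau)=\mathrm{id}_X$ and $U(t,\tau)=U(t,s)U(s,\tau)$ for $t\ge s\ge\tau$. For nonempty $B,C\subset X$, $\delta_X(B,C)=\sup_{x\in B}\inf_{\xi\in C}\mathrm{dist}(x,\xi)$. A set $K\subset X$ is uniformly attracting if for every bounded $C\subset X$, $\lim_{t-\tau\to\infty}\sup_{\sigma\in\Sigma}\delta_X(U_\sigma(t,\tau)C,K)=0$. The family is uniformly asymptotically compact if there is a compact uniformly attracting set; the uniform global attractor $A_\Sigma$ is the compact uniformly attracting set contained in every compact uniformly attracting set. Total uniform dissipativity: for every $\varepsilon>0$ there is a finite set $M_\varepsilon\subset X$ such that its open $\varepsilon$-neighborhood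 is uniformly absorbing, i.e. for every bounded $C\subset X$ there is $t_e$ with $U_\sigma(t,\tau)C$ contained in it for all $\sigma$ whenever $t-\tau\ge t_e$. The family is asymptotically closed with respect to a (finite with at least two terms, or infinite) sequence $0=h_0<h_1<h_2<\cdots$ if whenever $\sigma_n\to\sigma\in\Sigma$ and $U_{\sigma_n}(h_k,0)x_n\to\xi^k\in X$ as $n\to\infty$ for every $k$, then $U_\sigma(h_k,0)\xi^0=\xi^k$ for every $k$. For $\sigma\in\Sigma$, a complete bounded trajectory of $U_\sigma(t,\tau)$ is a function $x:\mathbb{R}\to X$ with bounded range and $x(s)=U_\sigma(s,\tau)x(\tau)$ for all $s\ge\tau$, $\tau\in\mathbb{R}$; $\mathcal{K}_\sigma(t)=\{x(t): x$ a complete bounded trajectory of $U_\sigma(t,\tau)\}$. *)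

From HB Require Import structures.
From mathcomp Require Import all_boot all_order all_algebra.
From mathcomp Require Import all_classical all_reals all_analysis.
Set Implicit Arguments. Unset Strict Implicit. Unset Printing Implicit Defensive.
Import Order.TTheory GRing.Theory Num.Theory.
Local Open Scope classical_set_scope.
Local Open Scope ring_scope.

Section Defs.
Variables (R : realType) (X Sigma : metricType R).

(* A family of processes {U_sigma(t,tau)}: U sigma t tau : X -> X.
   Values for t < tau are irrelevant. *)
Definition is_process (U : R -> R -> X -> X) : Prop :=
  (forall tau, U tau tau = id) /\
  (forall t s tau, s <= t -> tau <= s -> U t tau = U t s \o U s tau).

Definition is_semigroup (T : R -> Sigma -> Sigma) : Prop :=
  T 0 = id /\ (forall h1 h2, 0 <= h1 -> 0 <= h2 -> T (h1 + h2) = T h1 \o T h2).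

Definition mbounded (C : set X) : Prop :=
  exists r : R, forall x y, C x -> C y -> mdist x y <= r.

Definition hdelta (B C : set X) : \bar R :=
  ereal_sup [set ereal_inf [set (mdist x xi)%:E | xi in C] | x in B].

Definition unif_attracting (U : Sigma -> R -> R -> X -> X) (K : set X) : Prop :=
  forall C : set X, mbounded C ->
  forall e : R, 0 < e -> exists L : R, forall t tau : R, L <= t - tau ->
    (ereal_sup [set hdelta (U sigma t tau @` C) K | sigma in [set: Sigma]]
       <= e%:E)%E.

Definition unif_asymp_compact (U : Sigma -> R -> R -> X -> X) : Prop :=
  exists K : set X, compact K /\ unif_attracting U K.

Definition is_unif_global_attractor (U : Sigma -> R -> R -> X -> X)
    (A : set X) : Prop :=
  [/\ compact A, unif_attracting U A &
      forall K : set X, compact K -> unif_attracting U K -> A `<=` K].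

Definition admissible_seq (I : set nat) (h : nat -> R) : Prop :=
  ((exists N : nat, (2 <= N)%N /\ I = [set k | (k < N)%N]) \/ I = setT) /\
  h 0%N = 0 /\ (forall k, I k.+1 -> h k < h k.+1).

Definition asymp_closed (U : Sigma -> R -> R -> X -> X) (I : set nat)
    (h : nat -> R) : Prop :=
  forall (sigman : nat -> Sigma) (sigma : Sigma) (xn : nat -> X) (xi : nat -> X),
    sigman @ \oo --> sigma ->
    (forall k, I k -> (fun n => U (sigman n) (h k) 0 (xn n)) @ \oo --> xi k) ->
    forall k, I k -> U sigma (h k) 0 (xi 0%N) = xi k.

Definition complete_bdd_traj (U : Sigma -> R -> R -> X -> X) (sigma : Sigma)
    (x : R -> X) : Prop :=
  mbounded (range x) /\
  (forall s tau : R, tau <= s -> x s = U sigma s tau (x tau)).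

Definition kernel_section (U : Sigma -> R -> R -> X -> X) (sigma : Sigma)
    (t : R) : set X :=
  [set x t | x in complete_bdd_traj U sigma].

End Defs.

From HB Require Import structures.
From mathcomp Require Import all_boot all_order all_algebra.
From mathcomp Require Import all_classical all_reals all_analysis.
From mathcomp Require Import ring lra.
Import Order.TTheory GRing.Theory Num.Theory.
Local Open Scope classical_set_scope.
Local Open Scope ring_scope.

(* A point y of A is, by minimality of A, a limit of states U_{sigma_n}(t_n, 0) x_n
   with x_n close to A and t_n -> +oo.  Compactness of Sigma and uniform attraction
   to A allow a diagonal extraction along which, with H = h_1, all the shifted symbols
   T(t_n - m H) sigma_n and all the states U_{sigma_n}(t_n - m H + h_k, 0) x_n converge.
   Continuity of T(H) and asymptotic closedness turn these limits into a backward chain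
   pi_m, xi_m with T(H) pi_{m+1} = pi_m and U_{pi_{m+1}}(H, 0) xi_{m+1} = xi_m, which
   glues into a bounded complete trajectory of U_{pi_0} through xi_0 = y.  Conversely,
   every point of a bounded complete trajectory is attracted to A, hence lies in A. *)

Lemma increasing_seq_lt {phi : nat -> nat} :
  increasing_seq phi -> {mono phi : m n / (m < n)%N}.
Proof. by move=> phiP m n; rewrite !ltnNge -!leEnat phiP. Qed.

Lemma increasing_seq_ge {phi : nat -> nat} :
  increasing_seq phi -> forall n, (n <= phi n)%N.
Proof.
move=> /increasing_seq_lt phiP; elim=> // n IHn.
by apply: leq_ltn_trans IHn _; rewrite phiP.
Qed.

Lemma increasing_seq_comp {phi psi : nat -> nat} :
  increasing_seq phi -> increasing_seq psi -> increasing_seq (phi \o psi).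
Proof. by move=> phiP psiP m n /=; rewrite phiP -leEnat psiP. Qed.

Lemma increasing_seq_cvg {phi : nat -> nat} : increasing_seq phi -> phi @ \oo --> \oo.
Proof.
move=> phiP P [N _ NP]; exists N => // n Nn.
exact/NP/(leq_trans Nn)/increasing_seq_ge.
Qed.

Lemma cvg_subseq {T : Type} {z : nat -> T} {phi : nat -> nat} {F : set_system T} :
  increasing_seq phi -> z @ \oo --> F -> z \o phi @ \oo --> F.
Proof. by move=> /increasing_seq_cvg; apply: cvg_comp. Qed.

Section metric_sequences.
Context {R : realType} {Y : metricType R}.
Implicit Types (K : set Y) (z : nat -> Y).

Definition set_ball K (e : R) : set Y := [set x | exists2 xi, K xi & mdist x xi < e].

Definition approaches z K := forall e, 0 < e -> \forall n \near \oo, set_ball K e (z n).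

Lemma approaches_subseq {z K phi} :
  increasing_seq phi -> approaches z K -> approaches (z \o phi) K.
Proof. by move=> /increasing_seq_cvg phioo zK e /zK; apply: phioo. Qed.

Lemma set_ball_mbounded {K} e : mbounded K -> mbounded (set_ball K e).
Proof.
move=> [r Kr]; exists (e + r + e) => x y [xi Kxi xxi] [eta Keta yeta].
have := metric_triangle x xi y; have := metric_triangle xi eta y.
have := Kr _ _ Kxi Keta; rewrite [mdist eta y]metric_sym; lra.
Qed.

Lemma continuous_mdist (x : Y) : continuous (fun y : Y => mdist x y : R^o).
Proof.
move=> y; apply/cvgrPdist_lt => e e0; near=> y'.
have yy' : mdist y y' < e.
  by near: y'; exact: (metricType_numDomainType.cvgr_dist_lt cvg_id).
rewrite ltr_distlC; have := metric_triangle x y y'; have := metric_triangle x y' y.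
rewrite [mdist y' y]metric_sym; lra.
Unshelve. all: end_near. Qed.

Lemma compact_mbounded {K} : compact K -> mbounded K.
Proof.
move=> cK; have [->|/set0P[x0 Kx0]] := eqVneq K set0; first by exists 0.
have /compact_bounded[M [_ KM]] :=
  continuous_compact (continuous_subspaceT (continuous_mdist x0)) cK.
have Kx0M x : K x -> mdist x0 x <= M + 1.
  have M1 : M < M + 1 by rewrite ltrDl.
  by move=> Kx; have /= := KM _ M1 _ (imageP _ Kx); rewrite ger0_norm ?mdist_ge0.
exists ((M + 1) + (M + 1)) => x y Kx Ky.
by apply: le_trans (metric_triangle _ x0 _) _; rewrite lerD // ?Kx0M // metric_sym Kx0M.
Qed.

Lemma closed_set_ball {K y} : closed K -> (forall e, 0 < e -> set_ball K e y) -> K y.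
Proof.
move=> cK yK; apply: cK => B /metricType_numDomainType.nbhs_mdistP [e /= e0 eB].
by have [xi Kxi yxi] := yK e e0; exists xi; split => //; apply: eB.
Qed.

Lemma closed_mdist_ge (y : Y) (c : R) : closed [set z | c <= mdist y z].
Proof.
move=> z zcl /=; rewrite leNgt; apply/negP => zc.
have zB : nbhs z [set w | mdist z w < c - mdist y z].
  apply/metricType_numDomainType.nbhs_mdistP.
  by exists (c - mdist y z) => /=; rewrite ?subr_gt0.
have [w [/= cw zw]] := zcl _ zB.
have := metric_triangle y z w; lra.
Qed.

Lemma cluster_seqP z p : cluster (z @ \oo) p <->
  forall e, 0 < e -> forall N, exists2 n, (N <= n)%N & mdist p (z n) < e.
Proof.
split=> [zp e e0 N | zp A B [N _ NA] /metricType_numDomainType.nbhs_mdistP [e /= e0 eB]].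
  have zN : (z @ \oo) (z @` [set n | (N <= n)%N]) by exists N => // n /= Nn; exists n.
  have pe : nbhs p [set w | mdist p w < e].
    by apply/metricType_numDomainType.nbhs_mdistP; exists e.
  by have [_ [[n Nn <-] pzn]] := zp _ _ zN pe; exists n.
by have [n Nn pzn] := zp e e0 N; exists (z n); split; [exact: NA | exact: eB].
Qed.

Lemma cluster_subseq z p : cluster (z @ \oo) p ->
  exists2 phi, increasing_seq phi & z \o phi @ \oo --> p.
Proof.
move=> /cluster_seqP zp.
have /boolp.choice[g gP] : forall Nj : nat * nat,
    exists n, (Nj.1 <= n)%N /\ mdist p (z n) < Nj.2.+1%:R^-1.
  by move=> [N j]; have [|n] := zp j.+1%:R^-1 _ N; [rewrite invr_gt0 | exists n].
pose fix phi n := g (if n is m.+1 then (phi m).+1 else 0%N, n).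
have phiP n : mdist p (z (phi n)) < n.+1%:R^-1.
  by case: n => [|n]; [exact: (gP (0, 0)%N).2 | exact: (gP ((phi n).+1, n.+1)).2].
exists phi; first by apply/increasing_seqP => n; have [] := gP ((phi n).+1, n.+1).
apply/metricType_numDomainType.cvgrPdist_lt => e e0; near=> n.
apply: lt_trans (phiP n) _; near: n; exact: (near_infty_natSinv_lt (PosNum e0)).
Unshelve. all: end_near. Qed.

Lemma compact_cluster {K z} : compact K -> (forall n, K (z n)) ->
  exists2 p, K p & cluster (z @ \oo) p.
Proof.
move=> cK zK; have zK_ev : (z @ \oo) K by exists 0%N => // n _; exact: zK.
by have [p []] := cK _ _ zK_ev; exists p.
Qed.

Lemma compact_approaches_cluster {K z} : compact K -> approaches z K ->
  exists2 p, K p & cluster (z @ \oo) p.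
Proof.
move=> cK zK.
have /boolp.choice[g gP] : forall j, exists nxi : nat * Y,
    [/\ (j <= nxi.1)%N, K nxi.2 & mdist (z nxi.1) nxi.2 < j.+1%:R^-1].
  move=> j; have [|N _ NK] := zK j.+1%:R^-1; first by rewrite invr_gt0.
  have [xi Kxi zxi] := NK (maxn N j) (leq_maxl _ _).
  by exists (maxn N j, xi); split => //=; rewrite leq_maxr.
have gK j : K (g j).2 by case: (gP j).
have [p Kp /cluster_seqP xip] := @compact_cluster _ (fun j => (g j).2) cK gK.
exists p => //; apply/cluster_seqP => e e0 N.
have e20 : 0 < e / 2 by rewrite divr_gt0.
have [M _ MP] := near_infty_natSinv_lt (PosNum e20).
have [j /[!geq_max] /andP[Nj Mj] pj] := xip _ e20 (maxn N M).
have [jn _ zj] := gP j; exists (g j).1; first exact: leq_trans jn.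
rewrite metric_sym in zj; apply: le_lt_trans (metric_triangle p (g j).2 _) _.
by rewrite [e]splitr ltrD // (lt_trans zj (MP j Mj)).
Qed.

Lemma compact_approaches_subseq {K z} : compact K -> approaches z K ->
  exists2 phi, increasing_seq phi & exists p, K p /\ z \o phi @ \oo --> p.
Proof.
move=> cK /(compact_approaches_cluster cK)[p Kp /cluster_subseq[phi phiP zp]].
by exists phi => //; exists p.
Qed.

Lemma cvg_near_eq_unique z w (p q : Y) : (\forall n \near \oo, z n = w n) ->
  z @ \oo --> p -> w @ \oo --> q -> p = q.
Proof.
move=> zw zp wq; have wp : w @ \oo --> p by exact: cvg_trans (near_eq_cvg zw) zp.
exact: cvg_unique (@metric_hausdorff _ Y) _ _ _ _ wp wq.
Qed.

Lemma diagonal_subseq_nat {K} {z : nat -> nat -> Y} :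
  compact K -> (forall j, approaches (z j) K) ->
  exists2 phi, increasing_seq phi & forall j, exists p, K p /\ z j \o phi @ \oo --> p.
Proof.
move=> cK zK.
have /boolp.choice[ext extP] : forall jpsi : nat * (nat -> nat), exists theta,
    increasing_seq jpsi.2 ->
    increasing_seq theta /\ exists p, K p /\ z jpsi.1 \o (jpsi.2 \o theta) @ \oo --> p.
  move=> [j psi]; have [psiP|] := pselect (increasing_seq psi); last by exists id.
  have [theta thetaP zp] := compact_approaches_subseq cK (approaches_subseq psiP (zK j)).
  by exists theta.
pose fix Phi j := if j is i.+1 then Phi i \o ext (i, Phi i) else id.
have PhiP j : increasing_seq (Phi j).
  by elim: j => [//|j IHj]; apply: increasing_seq_comp IHj (extP (j, Phi j) IHj).1.
have Phi_cvg j : exists p, K p /\ z j \o Phi j.+1 @ \oo --> p := (extP (j, Phi j) (PhiP j)).2.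
have Phi_tail i j n : (j <= i)%N -> exists2 c, (n <= c)%N & Phi i n = Phi j c.
  elim: i n => [|i IHi] n; first by rewrite leqn0 => /eqP->; exists n.
  rewrite leq_eqVlt ltnS => /orP[/eqP->|ji]; first by exists n.
  have [c thc Phic] := IHi (ext (i, Phi i) n) ji; exists c => //.
  exact/(leq_trans _ thc)/increasing_seq_ge/(extP (i, Phi i) (PhiP i)).1.
exists (fun n => Phi n.+1 n).
  apply/increasing_seqP => n.
  have -> : Phi n.+2 n.+1 = Phi n.+1 (ext (n.+1, Phi n.+1) n.+1) by [].
  rewrite ltEnat /= (increasing_seq_lt (PhiP n.+1)).
  exact/increasing_seq_ge/(extP (n.+1, Phi n.+1) (PhiP n.+1)).1.
move=> j; have [p [Kp zp]] := Phi_cvg j; exists p; split => // V /zp[N _ NV].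
exists (maxn N j.+1) => // n Nj_n.
have /andP[Nn jn] : (N <= n)%N && (j < n)%N by rewrite -geq_max.
have [c nc Phic] := Phi_tail n.+1 j.+1 n (leqW jn).
by change (V (z j (Phi n.+1 n))); rewrite Phic; apply/NV/(leq_trans Nn).
Qed.

Lemma diagonal_subseq (J : countType) K (z : J -> nat -> Y) :
  compact K -> (forall j, approaches (z j) K) ->
  exists2 phi, increasing_seq phi & forall j, exists p, K p /\ z j \o phi @ \oo --> p.
Proof.
move=> cK zK; have [[j0 _]|J0] := pselect (exists j : J, True); last first.
  by exists id => // j; case: J0; exists j.
pose w n := z (odflt j0 (unpickle n)).
have [phi phiP wp] := diagonal_subseq_nat cK (fun n => zK _ : approaches (w n) K).
by exists phi => // j; have := wp (pickle j); rewrite /w pickleK.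
Qed.

End metric_sequences.

Section admissible_sequences.
Context {R : realType} {I : set nat} {h : nat -> R}.
Hypothesis hI : admissible_seq I h.

Lemma admissible_seq_mem1 : I 1%N.
Proof. by case: hI => [[[N [N2 ->]]|->] _]. Qed.

Lemma admissible_seq_ge0 k : I k -> 0 <= h k.
Proof.
have [Ishape [h0 h_incr]] := hI.
have I_pred i : I i.+1 -> I i by case: Ishape => [[N [_ ->]]|->] //; exact: ltnW.
elim: k => [_|k IHk Ik]; first by rewrite h0.
exact/(le_trans (IHk (I_pred _ Ik)))/ltW/h_incr.
Qed.

End admissible_sequences.

Section uniform_attraction.
Context {R : realType} {X Sigma : metricType R}.
Variable U : Sigma -> R -> R -> X -> X.

Lemma unif_attractingP K : unif_attracting U K <->
  forall C, mbounded C -> forall e, 0 < e -> exists L, forall sigma t tau x,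
    L <= t - tau -> C x -> set_ball K e (U sigma t tau x).
Proof.
split=> [KA C bC e e0 | KA C bC e e0].
  have e20 : 0 < e / 2 by rewrite divr_gt0.
  have [L LP] := KA C bC _ e20; exists L => sigma t tau x Lt Cx.
  have dK : (hdelta (U sigma t tau @` C) K <= (e / 2)%:E)%E.
    by apply: le_trans (LP t tau Lt); apply: ereal_sup_ubound; exists sigma.
  have : (ereal_inf [set (mdist (U sigma t tau x) xi)%:E | xi in K] < e%:E)%E.
    apply: le_lt_trans (le_trans (ereal_sup_ubound _) dK) _.
      by exists (U sigma t tau x) => //; exists x.
    by rewrite lte_fin ltr_pdivrMr // ltr_pMr // ltr1n.
  by case/ereal_inf_lt => _ [xi Kxi <-]; rewrite lte_fin; exists xi.
have [L LP] := KA C bC e e0; exists L => t tau Lt.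
apply: ge_ereal_sup => _ [sigma _ <-]; apply: ge_ereal_sup => _ [_ [x Cx <-] <-].
have [xi Kxi xxi] := LP sigma t tau x Lt Cx.
apply: ge_ereal_inf; exists (mdist (U sigma t tau x) xi)%:E; first by exists xi.
by rewrite lee_fin ltW.
Qed.

Lemma kernel_section_sub_attracting {K sigma t} :
  closed K -> unif_attracting U K -> kernel_section U sigma t `<=` K.
Proof.
move=> cK /unif_attractingP KA _ [x [xb xtr] <-].
apply: (closed_set_ball cK) => e e0.
have [L LP] := KA _ xb e e0.
have Lt : L <= t - (t - Num.max L 0) by rewrite opprB addrC subrK le_max lexx.
rewrite (xtr t (t - Num.max L 0)) ?gerBl ?le_max ?lexx ?orbT //.
exact: LP Lt (imageT _ _).
Qed.

Lemma unif_attracting_approaches {K C} {sig : nat -> Sigma} {s : nat -> R}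
    {x : nat -> X} :
  unif_attracting U K -> mbounded C -> (forall n, C (x n)) ->
  s n @[n --> \oo] --> +oo -> approaches (fun n => U (sig n) (s n) 0 (x n)) K.
Proof.
move=> /unif_attractingP KA bC Cx soo e e0; have [L LP] := KA C bC e e0.
near=> n; apply: LP (Cx n); rewrite subr0; near: n; exact: cvgry_ge.
Unshelve. all: end_near. Qed.

Section translation.
Variable T : R -> Sigma -> Sigma.
Hypothesis U_process : forall sigma, is_process (U sigma).
Hypothesis T_onto : forall s, 0 <= s -> T s @` [set: Sigma] = [set: Sigma].
Hypothesis U_shift : forall sigma s t tau, 0 <= s -> tau <= t ->
  U sigma (s + t) (s + tau) = U (T s sigma) t tau.

Lemma process_shift_origin sigma t tau :
  tau <= t -> exists rho, U sigma t tau = U rho (t - tau) 0.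
Proof.
move=> taut; have [tau0|tau0] := leP 0 tau.
  by exists (T tau sigma); rewrite -U_shift ?subr_ge0 // addr0 addrC subrK.
have Ntau0 : 0 <= - tau by rewrite oppr_ge0 ltW.
have [rho _ <-] : range (T (- tau)) sigma by rewrite T_onto.
by exists rho; rewrite -(U_shift _ _ _ _ Ntau0 taut) addNr addrC.
Qed.

Lemma attractor_approx {A y} : is_unif_global_attractor U A -> A y ->
  forall e L, 0 < e -> exists sigma x t,
    [/\ set_ball A 1 x, L <= t & mdist y (U sigma t 0 x) < e].
Proof.
move=> [cA /unif_attractingP AA Amin] Ay e L0 e0; apply: contrapT => far.
have {}far sigma x t : set_ball A 1 x -> L0 <= t -> e <= mdist y (U sigma t 0 x).
  by move=> Ax Lt; rewrite leNgt; apply/negP => close; apply: far; exists sigma, x, t.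
(* Otherwise [A] minus a neighbourhood of [y] would be a smaller compact attracting set. *)
pose A' := A `&` [set z | e / 2 <= mdist y z].
have cA' : compact A' by exact/compact_closedI/closed_mdist_ge.
suff /(Amin _ cA')/(_ y Ay)[_] : unif_attracting U A' by rewrite /= mdistxx; lra.
apply/unif_attractingP => C bC e' e'0.
have e'' : 0 < Num.min e' (e / 2) by rewrite lt_min e'0 divr_gt0.
have [L1 L1P] := AA C bC 1 ltr01.
have [L2 L2P] := AA _ (set_ball_mbounded 1 (compact_mbounded cA)) _ e''.
pose M1 := Num.max L1 0; pose M2 := Num.max (Num.max L2 L0) 0.
have [M1L1 M10] : L1 <= M1 /\ 0 <= M1 by rewrite !le_max !lexx orbT.
have [M2L2 M2L0 M20] : [/\ L2 <= M2, L0 <= M2 & 0 <= M2] by rewrite !le_max !lexx !orbT.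
exists (M1 + M2) => sigma t tau x Lt Cx.
have taus : tau <= tau + M1 by rewrite lerDl.
have st : tau + M1 <= t by lra.
rewrite ((U_process sigma).2 _ _ _ st taus) /=.
have [rho ->] := process_shift_origin sigma _ _ st.
have Bx : set_ball A 1 (U sigma (tau + M1) tau x) by apply: L1P => //; lra.
have far_x := far rho _ (t - (tau + M1)) Bx ltac:(lra).
have [xi Axi close] := L2P rho (t - (tau + M1)) 0 _ ltac:(lra) Bx.
have [min_e' min_e] : Num.min e' (e / 2) <= e' /\ Num.min e' (e / 2) <= e / 2.
  by rewrite !ge_min !lexx orbT.
exists xi; last by lra.
split => //=; move: far_x close; set u := U rho _ 0 _.
have := metric_triangle y xi u; rewrite [mdist u xi]metric_sym; lra.
Qed.

Hypothesis T_semigroup : is_semigroup T.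

Lemma semigroupD h1 h2 sigma :
  0 <= h1 -> 0 <= h2 -> T h1 (T h2 sigma) = T (h1 + h2) sigma.
Proof. by move=> h10 h20; rewrite T_semigroup.2. Qed.

Lemma kernel_section_of_chain {K} {H : R} {rho : nat -> Sigma} {xi : nat -> X} :
  mbounded K -> unif_attracting U K -> 0 < H ->
  (forall m, T H (rho m.+1) = rho m) ->
  (forall m, U (rho m.+1) H 0 (xi m.+1) = xi m) ->
  (forall m, K (xi m)) ->
  kernel_section U (rho 0%N) 0 (xi 0%N).
Proof.
move=> bK /unif_attractingP KA H0 Trho Uxi Kxi.
pose G m s := U (rho m) (s + m%:R * H) 0 (xi m).
have mH_ge0 m : 0 <= m%:R * H by rewrite mulr_ge0 // ltW.
have mHS m : m.+1%:R * H = H + m%:R * H by rewrite mulrSr mulrDl mul1r addrC.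
have G_succ m s : 0 <= s + m%:R * H -> G m.+1 s = G m s.
  move=> sm; have HsmH : H <= H + (s + m%:R * H) by rewrite lerDl.
  rewrite /G mHS addrCA ((U_process _).2 _ _ _ HsmH (ltW H0)) /=.
  by rewrite Uxi -(Trho m) -U_shift ?addr0 ?(ltW H0).
have G_le i j s : 0 <= s + i%:R * H -> (i <= j)%N -> G j s = G i s.
  move=> si; elim: j => [|j IH]; first by rewrite leqn0 => /eqP->.
  rewrite leq_eqVlt ltnS => /orP[/eqP->//|ij]; rewrite G_succ ?IH //.
  by apply: le_trans si _; rewrite lerD2l ler_wpM2r ?ler_nat ?ltW.
have large s : \forall m \near \oo, 0 <= s + m%:R * H.
  near=> m; rewrite -lerBlDl sub0r -ler_pdivrMr //; near: m; exact: nbhs_infty_ger.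
(* [G m s] does not depend on [m] as soon as [0 <= s + m H]. *)
pose x s := G (Num.truncn (- s / H)).+1 s.
have xG s m : 0 <= s + m%:R * H -> x s = G m s.
  have sM : 0 <= s + (Num.truncn (- s / H)).+1%:R * H.
    by rewrite -lerBlDl sub0r -ler_pdivrMr // ltW // truncnS_gt.
  move=> sm; case: (leqP (Num.truncn (- s / H)).+1 m) => [Mm|/ltnW mM].
    by rewrite (G_le _ _ _ sM Mm).
  by rewrite /x (G_le _ _ _ sm mM).
have rhoT m : T (m%:R * H) (rho m) = rho 0%N.
  elim: m => [|m IH]; first by rewrite mul0r T_semigroup.1.
  by rewrite -IH -(Trho m) semigroupD ?mH_ge0 ?(ltW H0) // addrC -mHS.
exists x; last by rewrite (xG 0 0%N) /G ?mul0r ?addr0 ?(U_process _).1.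
split.
  have [L LP] := KA K bK 1 ltr01.
  have x_near s : set_ball K 1 (x s).
    near \oo => m; rewrite (xG s m); last by near: m; exact: large.
    apply: LP (Kxi m); rewrite subr0 -subr_ge0 addrAC; near: m; exact: large.
  have [r rP] := set_ball_mbounded 1 bK.
  by exists r => _ _ [a _ <-] [b _ <-]; apply: rP.
move=> s tau taus; near \oo => m.
have tau_m : 0 <= tau + m%:R * H by near: m; exact: large.
have s_m : 0 <= s + m%:R * H by apply: le_trans tau_m _; rewrite lerD2r.
rewrite (xG s m) // (xG tau m) // /G -(rhoT m) -U_shift // [s + _]addrC [tau + _]addrC.
by rewrite ((U_process _).2 (m%:R * H + s) (m%:R * H + tau) 0) ?lerD2l // addrC.
Unshelve. all: end_near. Qed.

Lemma symbol_limits_chain (H : R) (sig : nat -> Sigma) (t : nat -> R)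
    (pi : nat -> Sigma) m :
  0 <= H -> continuous (T H) -> t n @[n --> \oo] --> +oo ->
  (forall m, T (t n - m%:R * H) (sig n) @[n --> \oo] --> pi m) ->
  T H (pi m.+1) = pi m.
Proof.
move=> H0 cTH too pi_lim.
apply: cvg_near_eq_unique (continuous_cvg _ (cTH _) (pi_lim m.+1)) (pi_lim m).
near=> n; have tm : 0 <= t n - m.+1%:R * H by rewrite subr_ge0; near: n; exact: cvgry_ge.
by rewrite /= semigroupD // mulrSr; congr T; ring.
Unshelve. all: end_near. Qed.

Lemma point_limits_chain I h (sig : nat -> Sigma) (x : nat -> X) (t : nat -> R)
    (pi : nat -> Sigma) (q : nat -> nat -> X) m :
  asymp_closed U I h -> I 1%N -> h 0%N = 0 -> (forall k, I k -> 0 <= h k) ->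
  t n @[n --> \oo] --> +oo ->
  (forall m, T (t n - m%:R * h 1%N) (sig n) @[n --> \oo] --> pi m) ->
  (forall m k, U (sig n) (t n - m%:R * h 1%N + h k) 0 (x n) @[n --> \oo] --> q m k) ->
  U (pi m.+1) (h 1%N) 0 (q m.+1 0%N) = q m 0%N.
Proof.
move=> aC I1 h0 h_ge0 too pi_lim q_lim.
have -> : q m 0%N = q m.+1 1%N.
  apply: cvg_near_eq_unique (q_lim m 0%N) (q_lim m.+1 1%N); apply: nearW => n.
  by rewrite h0 addr0 mulrSr; congr U; ring.
apply: (aC _ _ (fun n => U (sig n) (t n - m.+1%:R * h 1%N) 0 (x n)) _ (pi_lim m.+1)) I1.
move=> k Ik; apply: cvg_trans (near_eq_cvg _) (q_lim m.+1 k); near=> n.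
have tm : 0 <= t n - m.+1%:R * h 1%N by rewrite subr_ge0; near: n; exact: cvgry_ge.
rewrite /= -U_shift ?h_ge0 // addr0 ((U_process _).2 _ _ _ _ tm) // lerDl h_ge0 //.
Unshelve. all: end_near. Qed.

Lemma attractor_limits {A y} (H : R) (h : nat -> R) :
  compact [set: Sigma] -> is_unif_global_attractor U A -> A y ->
  exists (sig : nat -> Sigma) (x : nat -> X) (t : nat -> R)
         (pi : nat -> Sigma) (q : nat -> nat -> X),
  [/\ t n @[n --> \oo] --> +oo,
      U (sig n) (t n) 0 (x n) @[n --> \oo] --> y,
      forall m, T (t n - m%:R * H) (sig n) @[n --> \oo] --> pi m,
      forall m k, U (sig n) (t n - m%:R * H + h k) 0 (x n) @[n --> \oo] --> q m k &
      forall m k, A (q m k)].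
Proof.
move=> cS GA Ay; have [cA AA _] := GA.
have /boolp.choice[w wP] : forall n : nat, exists w : Sigma * X * R,
    [/\ set_ball A 1 w.1.2, n%:R <= w.2 & mdist y (U w.1.1 w.2 0 w.1.2) < n.+1%:R^-1].
  move=> n; have n_pos : 0 < n.+1%:R^-1 :> R by rewrite invr_gt0.
  by have [sig [x [t ?]]] := attractor_approx GA Ay _ n%:R n_pos; exists (sig, x, t).
pose sig n := (w n).1.1; pose x n := (w n).1.2; pose t n := (w n).2.
have Ax n : set_ball A 1 (x n) by case: (wP n).
have too : t n @[n --> \oo] --> +oo.
  apply/cvgryPge => r; near=> n; have [_ tn _] := wP n.
  by apply: le_trans tn; near: n; exact: nbhs_infty_ger.
have t_shift c d : t n - c + d @[n --> \oo] --> +oo.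
  apply/cvgryPge => r; near=> n; suff : r + c - d <= t n by lra.
  by near: n; exact: cvgry_ge.
have y_lim : U (sig n) (t n) 0 (x n) @[n --> \oo] --> y.
  apply/metricType_numDomainType.cvgrPdist_lt => e e0; near=> n.
  have [_ _ /lt_trans] := wP n; apply; near: n; exact: (near_infty_natSinv_lt (PosNum e0)).
pose zs m n := T (t n - m%:R * H) (sig n).
have zsS m : approaches (zs m) [set: Sigma].
  by move=> e e0; apply: nearW => n; exists (zs m n) => //; rewrite mdistxx.
have [phi1 phi1P /boolp.choice[pi piP]] := diagonal_subseq _ _ _ cS zsS.
pose zp (mk : nat * nat) n := U (sig n) (t n - mk.1%:R * H + h mk.2) 0 (x n).
have zpA mk : approaches (zp mk \o phi1) A.
  apply: approaches_subseq phi1P _.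
  have bA1 := set_ball_mbounded 1 (compact_mbounded cA).
  exact: unif_attracting_approaches AA bA1 Ax (t_shift _ _).
have [phi2 phi2P /boolp.choice[q qP]] := diagonal_subseq _ _ _ cA zpA.
have phiP := increasing_seq_comp phi1P phi2P.
exists (sig \o phi1 \o phi2), (x \o phi1 \o phi2), (t \o phi1 \o phi2), pi.
exists (fun m k => q (m, k)).
split => [||m|m k|m k]; first exact: cvg_subseq phiP too.
- exact: cvg_subseq phiP y_lim.
- exact: cvg_subseq phi2P (piP m).2.
- exact: (qP (m, k)).2.
- exact: (qP (m, k)).1.
Unshelve. all: end_near. Qed.

Lemma attractor_chain {A I h y} :
  compact [set: Sigma] -> is_unif_global_attractor U A -> admissible_seq I h ->
  asymp_closed U I h -> continuous (T (h 1%N)) -> A y ->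
  exists (pi : nat -> Sigma) (xi : nat -> X),
  [/\ forall m, T (h 1%N) (pi m.+1) = pi m,
      forall m, U (pi m.+1) (h 1%N) 0 (xi m.+1) = xi m,
      forall m, A (xi m) & xi 0%N = y].
Proof.
move=> cS GA hI aC cT Ay; have [_ [h0 _]] := hI.
have I1 := admissible_seq_mem1 hI.
have h1_ge0 : 0 <= h 1%N := admissible_seq_ge0 hI _ I1.
have [sig [x [t [pi [q [too y_lim pi_lim q_lim Aq]]]]]] :=
  attractor_limits (h 1%N) h cS GA Ay.
exists pi, (fun m => q m 0%N); split => [m|m|m|].
- exact: symbol_limits_chain h1_ge0 cT too pi_lim.
- exact: point_limits_chain aC I1 h0 (admissible_seq_ge0 hI) too pi_lim q_lim.
- exact: Aq.
- apply: cvg_near_eq_unique (q_lim 0%N 0%N) y_lim; apply: nearW => n.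
  by rewrite mul0r subr0 h0 addr0.
Qed.

End translation.

End uniform_attraction.

Theorem theorem6p6 (R : realType) (X Sigma : metricType R)
  (T : R -> Sigma -> Sigma) (U : Sigma -> R -> R -> X -> X)
  (I : set nat) (h : nat -> R) (A : set X) :
  compact [set: Sigma] ->
  is_semigroup T ->
  (forall s : R, 0 <= s -> T s @` [set: Sigma] = [set: Sigma]) ->
  (forall sigma : Sigma, is_process (U sigma)) ->
  (forall (sigma : Sigma) (s t tau : R), 0 <= s -> tau <= t ->
     U sigma (s + t) (s + tau) = U (T s sigma) t tau) ->
  unif_asymp_compact U ->
  is_unif_global_attractor U A ->
  admissible_seq I h ->
  asymp_closed U I h ->
  (forall k, I k -> continuous (T (h k))) ->
  A = \bigcup_(sigma in [set: Sigma]) kernel_section U sigma 0.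
Proof.
move=> cS T_sg T_onto U_proc U_shift _ GA hI aC cT; have [cA AA _] := GA.
apply/seteqP; split => [y Ay|y [sigma _]].
  have I1 := admissible_seq_mem1 hI.
  have h1_gt0 : 0 < h 1%N by have [_ [<-]] := hI; apply.
  have [pi [xi [Tpi Uxi Axi <-]]] :=
    attractor_chain U T U_proc T_onto U_shift T_sg cS GA hI aC (cT _ I1) Ay.
  exists (pi 0%N) => //.
  apply: (kernel_section_of_chain U T U_proc U_shift T_sg _ AA h1_gt0 Tpi Uxi Axi).
  exact: compact_mbounded.
have cA_closed : closed A := compact_closed (@metric_hausdorff _ X) cA.
exact: (kernel_section_sub_attracting U (K := A) cA_closed AA).
Qed.
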